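(* Let $X$ be a finite q-cycle set and suppose that the subgroup of $\mathrm{Sym}(X)$ generated by $\{\mathfrak{q},\mathfrak{q}'\}$ acts transitively on $X$. Then $X$ is irreducible.
   Context: A q-cycle set is a non-empty set $X$ with operations $\cdot,:$ such that each $y\mapsto x\cdot y$ is bijective and $(x\cdot y)\cdot(x\cdot z)=(y:x)\cdot(y\cdot z)$, $(x:y):(x:z)=(y\cdot x):(y:z)$, $(x\cdot y):(x\cdot z)=(y:x)\cdot(y:z)$ for all $x,y,z$. The squaring maps are $\mathfrak{q}(x):=x\cdot x$, $\mathfrak{q}'(x):=x:x$ (the hypothesis presupposes they are permutations of $X$). A sub-q-cycle set is a subset that is a q-cycle set under the restricted operations (the empty set also counts); $X$ is irreducible if $\emptyset$ and $X$ are its only sub-q-cycle sets. *)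

From mathcomp Require Import all_boot all_order all_fingroup.
Set Implicit Arguments. Unset Strict Implicit. Unset Printing Implicit Defensive.

Definition is_qcycle_set (X : Type) (dot colon : X -> X -> X) : Prop :=
  [/\ inhabited X,
      (forall x, bijective (dot x))
    & [/\ (forall x y z, dot (dot x y) (dot x z) = dot (colon y x) (dot y z)),
      (forall x y z, colon (colon x y) (colon x z) = colon (dot y x) (colon y z))
    & (forall x y z, colon (dot x y) (dot x z) = dot (colon y x) (colon y z)) ] ].

(* The empty set counts. *)
Definition sub_qcycle_set (X : finType) (dot colon : X -> X -> X)
    (S : {set X}) : Prop :=
  [/\ (forall x y, x \in S -> y \in S -> dot x y \in S),
      (forall x y, x \in S -> y \in S -> colon x y \in S),
      (forall x, x \in S ->
         {in S &, injective (dot x)} /\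
         (forall z, z \in S -> exists2 y, y \in S & dot x y = z))
    & [/\ (forall x y z, x \in S -> y \in S -> z \in S -> dot (dot x y) (dot x z) = dot (colon y x) (dot y z)),
      (forall x y z, x \in S -> y \in S -> z \in S -> colon (colon x y) (colon x z) = colon (dot y x) (colon y z))
      & (forall x y z, x \in S -> y \in S -> z \in S -> colon (dot x y) (dot x z) = dot (colon y x) (colon y z)) ] ].

Definition qcycle_irreducible (X : finType) (dot colon : X -> X -> X) : Prop :=
  forall S : {set X}, sub_qcycle_set dot colon S -> S = set0 \/ S = setT.

From mathcomp Require Import all_boot all_order all_fingroup.

Set Implicit Arguments.
Unset Strict Implicit.
Unset Printing Implicit Defensive.

(* A sub-q-cycle set is closed under both operations, hence under the squaring
   maps q and q', hence under the group they generate.  A nonempty subset that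
   is stable under a transitive group is the whole set. *)

Lemma transitive_acts_setT (aT : finGroupType) (T : finType)
    (to : {action aT &-> T}) (G : {group aT}) (S : {set T}) (x : T) :
  [transitive G, on [set: T] | to] -> [acts G, on S | to] -> x \in S ->
  S = [set: T].
Proof.
move=> trG actsGS xS; apply/eqP; rewrite eqEsubset subsetT.
by rewrite -(atransP trG _ (in_setT x)) acts_sub_orbit.
Qed.

Lemma gen_perm_acts (T : finType) (A : {set {perm T}}) (S : {set T}) :
  {in A, forall s : {perm T}, {in S, forall x, s x \in S}} ->
  [acts <<A>>%g, on S | 'P].
Proof.
move=> stableS; rewrite gen_subG; apply/subsetP => s As.
by rewrite !inE /=; apply/subsetP => x Sx; rewrite inE /= /aperm stableS.
Qed.

Theorem mainTheorem16 (X : finType) (dot colon : X -> X -> X)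
    (q q' : {perm X})
    (hX : is_qcycle_set dot colon)
    (hq : forall x, q x = dot x x)
    (hq' : forall x, q' x = colon x x)
    (htrans : [transitive <<[set q; q']>>, on [set: X] | 'P]) :
  qcycle_irreducible dot colon.
Proof.
move=> S [closed_dot closed_colon _ _].
have [->|[x xS]] := set_0Vmem S; [by left | right].
apply: (transitive_acts_setT htrans _ xS); apply: gen_perm_acts => s.
by rewrite !inE => /orP[]/eqP-> y Sy; rewrite ?hq ?hq' ?closed_dot ?closed_colon.
Qed.
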